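(* Let $V$ be a vertex algebra and $M$ a subspace of $V$ with $\mathbf{1}\in M$. Then $M$ is an $MZ_{0,-1}$-subspace of $V$ if and only if $M=V$.
   Context: A vertex algebra $(V,Y,\mathbf{1})$ is over $\mathbb{C}$ with vacuum $\mathbf{1}$; for $u\in V$ write $Y(u,z)=\sum_{n\in\mathbb{Z}}u_nz^{-n-1}$ with $u_n\in\operatorname{End}V$. Iterated products are nested to the right: $v_{n_1}\cdots v_{n_t}v=v_{n_1}(\cdots(v_{n_t}v))$. For a subspace $M\subseteq V$: $r_{0,-1}(M)$ is the set of $v\in V$ for which there is $m\ge 0$ with $v_{n_1}\cdots v_{n_t}v\in M$ for all $t\ge m$ and all $n_1,\dots,n_t\in\{0,-1\}$. $lsr_{0,-1}(M)$ is the set of $v\in V$ such that for every $b\in V$ there is $m\ge0$ with $b_sv_{n_1}\cdots v_{n_t}v\in M$ for all $t\ge m$ and all $s,n_1,\dots,n_t\in\{0,-1\}$. $rsr_{0,-1}(M)$ is the set of $v\in V$ such that for every $w\in V$ there is $m\ge 0$ with $(v_{n_1}\cdots v_{n_t}v)_nw\in M$ for all $t\ge m$ and all $n,n_1,\dots,n_t\in\{0,-1\}$. $sr_{0,-1}(M)=lsr_{0,-1}(M)\cap rsr_{0,-1}(M)$. $M$ is an $MZ_{0,-1}$-subspace of $V$ if $r_{0,-1}(M)=sr_{0,-1}(M)$. *)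

From HB Require Import structures.
From mathcomp Require Import all_boot all_order all_algebra.
From mathcomp Require Import complex.
From mathcomp Require Import Rstruct.
Set Implicit Arguments. Unset Strict Implicit. Unset Printing Implicit Defensive.
Import Order.TTheory GRing.Theory Num.Theory.
Local Open Scope ring_scope.

Notation C := (complex Rdefinitions.R).

Definition binomC (p : int) (i : nat) : C :=
  (\prod_(j < i) ((p - (j : nat)%:Z)%:~R : C)) / (i`!)%:R.

Section VA.
Variable V : lmodType C.
(* Y n u w  stands for  u_n w, where Y(u,z) = sum_n u_n z^{-n-1}. *)
Variable Y : int -> V -> V -> V.
Variable vac : V.

(* Borcherds (Jacobi) identity; the sums over i >= 0 are finite by truncation,
   formalised as: all sufficiently long partial sums agree. *)
Definition borcherds_identity : Prop :=
  forall (u v w : V) (p q r : int), exists N : nat, forall N' : nat, (N <= N')%N ->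
    \sum_(i < N') binomC p i *: Y (p + q - (i : nat)%:Z) (Y (r + (i : nat)%:Z) u v) w
    = \sum_(i < N') ((-1) ^+ i * binomC r i) *:
        (Y (p + r - (i : nat)%:Z) u (Y (q + (i : nat)%:Z) v w)
         - (-1) ^ r *: Y (q + r - (i : nat)%:Z) v (Y (p + (i : nat)%:Z) u w)).

Definition is_vertex_algebra : Prop :=
      (forall n (a : C) u1 u2 w, Y n (a *: u1 + u2) w = a *: Y n u1 w + Y n u2 w) /\
      (forall n (a : C) u w1 w2, Y n u (a *: w1 + w2) = a *: Y n u w1 + Y n u w2) /\
      (* truncation: Y(u,z)w has only finitely many negative powers of z *)
      (forall u w, exists N : int, forall n, N <= n -> Y n u w = 0) /\
      (forall n w, Y n vac w = if n == -1 then w else 0) /\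
      (* creation: Y(u,z)1 in V[[z]] and its constant term is u *)
      (forall u, (forall n, 0 <= n -> Y n u vac = 0) /\ Y (-1) u vac = u) /\
    borcherds_identity.

Definition is_subspace (M : V -> Prop) : Prop :=
  M 0 /\ forall (a : C) x y, M x -> M y -> M (a *: x + y).

Definition in01 (s : seq int) : bool := all (fun n => (n == 0) || (n == -1)) s.

(* v_{n1} ... v_{nt} v, nested to the right, for s = [:: n1; ...; nt]. *)
Definition iterv (v : V) (s : seq int) : V := foldr (fun n x => Y n v x) v s.

Definition r01 (M : V -> Prop) (v : V) : Prop :=
  exists m : nat, forall s, in01 s -> (m <= size s)%N -> M (iterv v s).

Definition lsr01 (M : V -> Prop) (v : V) : Prop :=
  forall b : V, exists m : nat, forall (k : int) s,
    (k == 0) || (k == -1) -> in01 s -> (m <= size s)%N -> M (Y k b (iterv v s)).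

Definition rsr01 (M : V -> Prop) (v : V) : Prop :=
  forall w : V, exists m : nat, forall (n : int) s,
    (n == 0) || (n == -1) -> in01 s -> (m <= size s)%N -> M (Y n (iterv v s) w).

Definition sr01 (M : V -> Prop) (v : V) : Prop := lsr01 M v /\ rsr01 M v.

Definition MZ01_subspace (M : V -> Prop) : Prop :=
  forall v, r01 M v <-> sr01 M v.
End VA.

From HB Require Import structures.
From mathcomp Require Import all_boot all_order all_algebra.
From mathcomp Require Import complex Rstruct.
Import GRing.Theory.
Local Open Scope ring_scope.

(* Only the vacuum axiom Y(1,z) = id matters.  Every iterate of 1 under the
   modes 0 and -1 is 1 or 0, so 1 lies in r_{0,-1}(M) as soon as 1 lies in M.
   If M is an MZ_{0,-1}-subspace, 1 then lies in rsr_{0,-1}(M); taking all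
   indices equal to -1 makes the iterate 1 again, and 1_{-1} w = w puts every
   w in M. *)

Lemma in01_nseq m : in01 (nseq m (-1)).
Proof. by elim: m => //= m ->; rewrite orbT. Qed.

Section Vacuum.
Set Implicit Arguments.
Unset Strict Implicit.

Variables (V : lmodType C) (Y : int -> V -> V -> V) (vac : V) (M : V -> Prop).

Lemma vertex_algebra_vacuum :
  is_vertex_algebra Y vac -> forall n w, Y n vac w = if n == -1 then w else 0.
Proof. by case=> _ [_ [_ [Yvac _]]]. Qed.

Lemma full_MZ01_subspace : (forall v, M v) -> MZ01_subspace Y M.
Proof. by move=> Mall v; split=> _; [split=> ?; exists 0%N | exists 0%N]. Qed.

Hypothesis Y_vac : forall n w, Y n vac w = if n == -1 then w else 0.

Lemma iterv_vac s : iterv Y vac s = if all (eq_op^~ (-1)) s then vac else 0.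
Proof.
by elim: s => [|n s IHs] //=; rewrite Y_vac IHs; case: (n == -1).
Qed.

Lemma iterv_vac_nseq m : iterv Y vac (nseq m (-1)) = vac.
Proof. by rewrite iterv_vac all_nseq eqxx orbT. Qed.

Lemma r01_vac : is_subspace M -> M vac -> r01 Y M vac.
Proof.
move=> [M0 _] Mvac; exists 0%N => s _ _.
by rewrite iterv_vac; case: ifP.
Qed.

Lemma rsr01_vac_full : rsr01 Y M vac -> forall w, M w.
Proof.
move=> rsr w; have [m Mm] := rsr w.
have := Mm (-1) (nseq m (-1)) (orbT _) (in01_nseq m).
by rewrite size_nseq iterv_vac_nseq Y_vac eqxx; apply.
Qed.

End Vacuum.

Theorem mainTheorem5 (V : lmodType C) (Y : int -> V -> V -> V) (vac : V)
    (HVA : is_vertex_algebra Y vac) (M : V -> Prop)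
    (HM : is_subspace M) (Hvac : M vac) :
  MZ01_subspace Y M <-> (forall v : V, M v).
Proof.
have Y_vac := vertex_algebra_vacuum HVA.
split; last exact: full_MZ01_subspace.
move=> MZ; have [_ rsr] := proj1 (MZ vac) (r01_vac Y_vac HM Hvac).
exact: rsr01_vac_full Y_vac rsr.
Qed.
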